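(* Let $H=(\mathcal{V},\mathcal{I})$ be an interval hypergraph and $k\geq1$ an integer. There exists a partition of $\mathcal{I}$ into $k$ parts such that each part is an exactly hittable set if and only if there exists a conflict-free colouring of $H$ with $k$ non-zero colours.
   Context: An interval hypergraph has vertex set $[n]=\{1,\dots,n\}$ and hyperedges that are nonempty sets of consecutive integers. A set (family) $\mathcal{S}$ of hyperedges is exactly hittable if there is a set $T\subseteq\mathcal{V}$ (an exact hitting set) with $|T\cap I|=1$ for every $I\in\mathcal{S}$. A conflict-free colouring of $H$ is a function $C:\mathcal{V}\to\{0,1,2,\dots\}$ such that every hyperedge $I$ contains a colour $j\geq1$ with $|I\cap C^{-1}(j)|=1$; colour $0$ is not counted among the colours used. *)

From mathcomp Require Import all_boot.
Set Implicit Arguments. Unset Strict Implicit. Unset Printing Implicit Defensive.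

(* Vertex set [n] is modelled by 'I_n (vertex i+1 of the paper is the ordinal i). *)

Definition is_interval (n : nat) (A : {set 'I_n}) : Prop :=
  A != set0 /\
  forall x y z : 'I_n, x \in A -> z \in A -> x <= y -> y <= z -> y \in A.

Definition interval_hypergraph (n : nat) (E : {set {set 'I_n}}) : Prop :=
  forall I, I \in E -> is_interval I.

Definition exact_hitting_set (n : nat) (S : {set {set 'I_n}}) (T : {set 'I_n}) : Prop :=
  forall I, I \in S -> #|T :&: I| = 1.

Definition exactly_hittable (n : nat) (S : {set {set 'I_n}}) : Prop :=
  exists T : {set 'I_n}, exact_hitting_set S T.

(* Conflict-free colouring with colours {0,1,...,k}; colour 0 is "uncoloured"
   and is not counted, so it uses (at most) k non-zero colours. *)
Definition conflict_free (n k : nat) (E : {set {set 'I_n}}) (C : 'I_n -> 'I_k.+1) : Prop :=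
  forall I, I \in E ->
    exists j : 'I_k.+1, (0 < j) /\ #|[set v in I | C v == j]| = 1.

Definition partition_exactly_hittable (n k : nat) (E : {set {set 'I_n}}) : Prop :=
  exists part : {set 'I_n} -> 'I_k,
    forall j : 'I_k, exactly_hittable [set I in E | part I == j].

From Stdlib Require Import Classical.
From mathcomp Require Import all_boot.
Set Implicit Arguments. Unset Strict Implicit. Unset Printing Implicit Defensive.

(* The colour classes of a conflict-free colouring are exact hitting sets of
   the parts "hyperedges with a unique vertex of colour j".  Conversely, exact
   hitting sets T_1, ..., T_k of the parts give a colouring once they are made
   pairwise disjoint.  If v lies in T_p and T_q, splice the two sets at v: on
   each side of v, the traces of intervals through v are nested, so one of
   T_p, T_q misses every such trace that the other misses; that one goes to the
   first new set, which also receives v, and the other to the second new set.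
   Every interval hit exactly once by T_p or by T_q is then hit exactly once by
   one of the new sets, and the total size drops by one. *)

Lemma card_pointwise (T : finType) (X Y A B : {set T}) (v : T) :
  (forall x, (x \in X) + (x \in Y) + (x == v) = (x \in A) + (x \in B)) ->
  #|X| + #|Y| + 1 = #|A| + #|B|.
Proof.
move=> pointwise.
have card_sum (S : {set T}) : #|S| = \sum_x (x \in S).
  by rewrite -sum1_card big_mkcond; apply: eq_bigr => x _; case: (x \in S).
have -> : 1 = \sum_x (x == v).
  by rewrite (bigD1 v) //= eqxx big1 // => x /negbTE ->.
rewrite !card_sum -!big_split; exact: eq_bigr.
Qed.

Section Splicing.

Variable n : nat.
Implicit Types (v x y : 'I_n) (A B L R S X Y I J : {set 'I_n}) (d : bool).

Definition side d v x : bool := if d then x < v else v < x.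

Definition ray d v I : {set 'I_n} := [set x in I | side d v x].

Definition splice v L R (b : bool) : {set 'I_n} :=
  [set x : 'I_n | if x < v then x \in L else if v < x then x \in R else b].

Lemma interval_one_side I v :
  is_interval I -> v \notin I -> exists d, forall x, x \in I -> side d v x.
Proof.
move=> [_ convI] vNI.
case: (boolP [exists x in I, x < v]) => [/exists_inP [a aI av] | /exists_inPn below].
- exists true => x xI; rewrite /side /= ltnNge; apply: contra vNI => vx.
  exact: convI aI xI (ltnW av) vx.
- exists false => x xI; rewrite /side /= ltn_neqAle leqNgt below // andbT.
  by apply: contraNneq vNI => /val_inj ->.
Qed.

(* Both rays lie on the same side of v, so one of y, x lies between the other
   and v. *)
Lemma ray_exchange d v X Y I J y :
  is_interval I -> is_interval J -> v \in I -> v \in J ->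
  [disjoint X & ray d v I] -> y \in Y -> y \in ray d v I ->
  [disjoint Y & ray d v J] -> [disjoint X & ray d v J].
Proof.
move=> [_ convI] [_ convJ] vI vJ freeXI yY yray freeYJ.
move: yray; rewrite inE => /andP [yI yside].
rewrite disjoint_subset; apply/subsetP => x xX.
rewrite !inE; apply/negP => /andP [xJ xside].
have [xI | yJ] : x \in I \/ y \in J.
  case: d {freeXI freeYJ} xside yside => /= xside yside; case: (leqP y x) => yx.
  - by left; exact: convI yI vI yx (ltnW xside).
  - by right; exact: convJ xJ vJ (ltnW yx) (ltnW yside).
  - by right; exact: convJ vJ xJ (ltnW yside) yx.
  - by left; exact: convI vI yI (ltnW xside) (ltnW yx).
- by move: (disjointFr freeXI xX); rewrite inE xI xside.
- by move: (disjointFr freeYJ yY); rewrite inE yJ yside.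
Qed.

Lemma exists_dominant d v A B :
  exists L L', ((L, L') = (A, B) \/ (L, L') = (B, A)) /\
    forall I, is_interval I -> v \in I ->
      [disjoint A & ray d v I] || [disjoint B & ray d v I] ->
      [disjoint L & ray d v I].
Proof.
case: (classic (exists I, [/\ is_interval I, v \in I, [disjoint A & ray d v I]
                            & ~~ [disjoint B & ray d v I]])).
- case=> I [intI vI freeA /pred0Pn [y /andP [yB yray]]].
  exists A, B; split; first by left.
  move=> J intJ vJ /orP [// | freeB].
  exact: ray_exchange intI intJ vI vJ freeA yB yray freeB.
- move=> noI; exists B, A; split; first by right.
  move=> J intJ vJ /orP [freeA | //]; apply: contraT => notB.
  by case: noI; exists J.
Qed.

Lemma hit_once_ray_free d v S I :
  v \in S -> v \in I -> #|S :&: I| = 1 -> [disjoint S & ray d v I].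
Proof.
move=> vS vI /eqP/cards1P [w SIw].
have in_SI x : x \in S -> x \in I -> x = w.
  by move=> xS xI; apply/set1P; rewrite -SIw inE xS xI.
rewrite disjoint_subset; apply/subsetP => x xS.
rewrite !inE; apply/negP => /andP [xI xside].
move: xside; rewrite (in_SI x xS xI) -(in_SI v vS vI).
by case: d; rewrite /= ltnn.
Qed.

Lemma splice_one_side d v L R b I :
  (forall x, x \in I -> side d v x) ->
  splice v L R b :&: I = (if d then L else R) :&: I.
Proof.
move=> sideI; apply/setP => x; rewrite !inE.
case xI: (x \in I); rewrite ?andbF // !andbT.
move: (sideI x xI); case: d {sideI} => /= xside; first by rewrite xside.
by rewrite ltnNge (ltnW xside) xside.
Qed.

Lemma splice_hit_once v L R I :
  v \in I -> [disjoint L & ray true v I] -> [disjoint R & ray false v I] ->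
  splice v L R true :&: I = [set v].
Proof.
move=> vI freeL freeR; apply/setP => x; rewrite !inE.
case: (eqVneq x v) => [-> | xNv]; first by rewrite ltnn vI.
case: ltngtP => [xv | vx | /val_inj xv]; last by rewrite xv eqxx in xNv.
- apply/negbTE/andP => -[xL xI].
  by move: (disjointFr freeL xL); rewrite inE xI /= xv.
- apply/negbTE/andP => -[xR xI].
  by move: (disjointFr freeR xR); rewrite inE xI /= vx.
Qed.

Lemma card_splice v L L' R R' A B :
  (L, L') = (A, B) \/ (L, L') = (B, A) -> (R, R') = (A, B) \/ (R, R') = (B, A) ->
  v \in A -> v \in B ->
  #|splice v L R true| + #|splice v L' R' false| + 1 = #|A| + #|B|.
Proof.
move=> swapL swapR vA vB; apply: (card_pointwise (v := v)) => x; rewrite !inE.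
case: (eqVneq x v) => [-> | xNv]; first by rewrite ltnn vA vB.
case: ltngtP => [_ | _ | /val_inj xv]; last by rewrite xv eqxx in xNv.
- by case: swapL => -[-> ->]; rewrite addn0 // addnC.
- by case: swapR => -[-> ->]; rewrite addn0 // addnC.
Qed.

Lemma uncross A B v : v \in A -> v \in B ->
  exists X Y, #|X| + #|Y| + 1 = #|A| + #|B| /\
    forall I, is_interval I -> #|A :&: I| = 1 \/ #|B :&: I| = 1 ->
      #|X :&: I| = 1 \/ #|Y :&: I| = 1.
Proof.
move=> vA vB.
have [L [L' [swapL domL]]] := exists_dominant true v A B.
have [R [R' [swapR domR]]] := exists_dominant false v A B.
exists (splice v L R true), (splice v L' R' false).
split; first exact: card_splice.
move=> I intI hitAB; case: (boolP (v \in I)) => [vI | vNI].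
  have free d : [disjoint A & ray d v I] || [disjoint B & ray d v I].
    by case: hitAB => hit; apply/orP; [left | right]; exact: hit_once_ray_free.
  by left; rewrite splice_hit_once ?cards1 ?domL ?domR.
have [d sideI] := interval_one_side intI vNI.
rewrite !(splice_one_side _ _ _ sideI).
by case: d {sideI}; [case: swapL | case: swapR] => -[-> ->]; tauto.
Qed.

End Splicing.

Section Labellings.

Variables (n k : nat) (E : {set {set 'I_n}}).
Implicit Types (part : {set 'I_n} -> 'I_k) (T : 'I_k -> {set 'I_n}).

Definition exact_labelling part T :=
  forall I, I \in E -> #|T (part I) :&: I| = 1.

Lemma exact_labelling_of_partition :
  partition_exactly_hittable k E -> exists part T, exact_labelling part T.
Proof.
case=> part /fin_all_exists [T hitT]; exists part, T => I IE.
by apply: hitT; rewrite inE IE eqxx.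
Qed.

Lemma exact_labelling_shrink part T p q v :
  interval_hypergraph E -> exact_labelling part T ->
  p != q -> v \in T p -> v \in T q ->
  exists part' T', exact_labelling part' T' /\
    \sum_(j < k) #|T' j| < \sum_(j < k) #|T j|.
Proof.
move=> intE hitT pNq vp vq.
have [X [Y [cardXY hitXY]]] := uncross vp vq.
have qNp : (q == p) = false by rewrite eq_sym; exact: negbTE.
pose T' j := if j == p then X else if j == q then Y else T j.
pose part' I := if (part I == p) || (part I == q)
                then if #|X :&: I| == 1 then p else q else part I.
exists part', T'; split.
- move=> I IE; rewrite /part' /T'.
  case: (boolP ((part I == p) || (part I == q))) => [pq | /norP [partNp partNq]];
    last by rewrite (negbTE partNp) (negbTE partNq); exact: hitT.
  have hitAB : #|T p :&: I| = 1 \/ #|T q :&: I| = 1.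
    by case/orP: pq => /eqP <-; [left | right]; apply: hitT.
  case: (boolP (#|X :&: I| == 1)) => [/eqP hitX | hitX]; first by rewrite eqxx.
  rewrite qNp eqxx.
  by case: (hitXY I (intE I IE) hitAB) => // hitX1; rewrite hitX1 eqxx in hitX.
- suff sumT' : \sum_(j < k) #|T' j| + 1 = \sum_(j < k) #|T j|.
    by rewrite -sumT' addn1.
  rewrite (bigD1 p) //= [in RHS](bigD1 p) //=.
  rewrite (bigD1 q) ?qNp //= [in RHS](bigD1 q) ?qNp //= /T' !eqxx qNp.
  rewrite (eq_bigr (fun j => #|T j|)) => [|j /andP [/negbTE -> /negbTE ->] //].
  by rewrite !addnA -cardXY addnAC.
Qed.

Lemma exact_labelling_disjoint part T :
  interval_hypergraph E -> exact_labelling part T ->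
  exists part' T', exact_labelling part' T' /\
    forall p q, p != q -> [disjoint T' p & T' q].
Proof.
move=> intE; have [m] := ubnP (\sum_(j < k) #|T j|).
elim: m => // m IH in part T *; rewrite ltnS => sizeT hitT.
case: (boolP [exists p, exists q, (p != q) && ~~ [disjoint T p & T q]]).
- case/existsP => p /existsP [q /andP [pNq /pred0Pn [v /andP [vp vq]]]].
  have [part' [T' [hit' smaller]]] := exact_labelling_shrink intE hitT pNq vp vq.
  exact: IH (leq_trans smaller sizeT) hit'.
- move/existsPn => noOverlap; exists part, T; split => // p q pNq.
  by move/existsPn: (noOverlap p) => /(_ q); rewrite pNq negbK.
Qed.

Lemma conflict_free_of_disjoint part T :
  exact_labelling part T -> (forall p q, p != q -> [disjoint T p & T q]) ->
  exists C : 'I_n -> 'I_k.+1, conflict_free E C.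
Proof.
move=> hitT disjT.
exists (fun v => if [pick j | v \in T j] is Some j then lift ord0 j else ord0).
move=> I IE; exists (lift ord0 (part I)); split; first by rewrite lift0.
rewrite -(hitT I IE); apply: eq_card => v; rewrite !inE andbC; congr (_ && _).
case: pickP => [j vj | none]; last by rewrite none (negbTE (neq_lift _ _)).
rewrite (inj_eq lift_inj); apply/eqP/idP => [<- // | vpart].
by apply: contraTeq vpart => jNpart; rewrite (disjointFr (disjT _ _ jNpart) vj).
Qed.

Lemma partition_of_conflict_free (C : 'I_n -> 'I_k.+1) :
  0 < k -> conflict_free E C -> partition_exactly_hittable k E.
Proof.
move=> k_gt0 cfC.
pose unique_colour (I : {set 'I_n}) (j : 'I_k) :=
  #|[set v in I | C v == lift ord0 j]| == 1.
exists (fun I => odflt (Ordinal k_gt0) [pick j | unique_colour I j]) => j.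
exists [set v | C v == lift ord0 j] => I; rewrite inE => /andP [IE /eqP partIj].
case: pickP partIj => [j' uniq_j' /= <- | none _].
  by rewrite -(eqP uniq_j'); apply: eq_card => v; rewrite !inE andbC.
have [c [c_gt0 uniq_c]] := cfC I IE.
case: (unliftP ord0 c) uniq_c c_gt0 => [j' -> | ->] // uniq_j'.
by move: (none j'); rewrite /unique_colour uniq_j' eqxx.
Qed.

End Labellings.

Theorem theorem4 (n k : nat) (E : {set {set 'I_n}}) :
  interval_hypergraph E -> 1 <= k ->
  (partition_exactly_hittable k E <->
   exists C : 'I_n -> 'I_k.+1, conflict_free E C).
Proof.
move=> intE k_gt0; split.
- case/exact_labelling_of_partition => part [T hitT].
  have [part' [T' [hit' disjT']]] := exact_labelling_disjoint intE hitT.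
  exact: conflict_free_of_disjoint hit' disjT'.
- by case=> C cfC; exact: partition_of_conflict_free k_gt0 cfC.
Qed.
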